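(* In the standing setup (see context), let $\mathcal L$ be a $\mathrm{Gal}(k^{\mathrm{sep}}/k)$-stable subgroup of $(k^{\mathrm{sep}})^\times$. (1) For every $n\in\mathbb Z$, $C^{(\mathcal L)}_{\mathbf V}(\gamma)\subseteq C^{(\mathcal L^n)}_{\mathbf V}(\gamma^n)$ and $C^{(\mathcal L)}_{\mathbf G}(\gamma)\subseteq C^{(\mathcal L^n)}_{\mathbf G}(\gamma^n)$, where $\mathcal L^n=\{x^n:x\in\mathcal L\}$; if $\mu_n(k^{\mathrm{sep}})\subseteq\mathcal L$, both containments are equalities. (2) If the automorphism of $\mathbf G$ induced by $\gamma$ has finite order $N$, and $n\in\mathbb Z$ satisfies $\mu_N(k^{\mathrm{sep}})\cap\mathcal L\subseteq\mu_n(k^{\mathrm{sep}})\subseteq\mathcal L$, then $\mathrm{Cent}_{\mathbf G}(\gamma^n)=C^{(\mathcal L)}_{\mathbf G}(\gamma)$.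
   Context: Standing setup: $k$ a field with separable closure $k^{\mathrm{sep}}$; $\mathbf G$ an affine algebraic group over $k$ (not necessarily smooth or connected) with a faithful finite-dimensional representation $\mathbf G\to\mathrm{GL}(\mathbf V)$; $\gamma\in N_{\mathrm{GL}(V)}(\mathbf G)(k)$ semisimple and diagonalisable over $k^{\mathrm{sep}}$ ($\gamma$ need not lie in $G$). For a subgroup $\mathcal L$ of $(k^{\mathrm{sep}})^\times$ and $\lambda\in(k^{\mathrm{sep}})^\times$, the $\mathcal L$-close $\lambda$-eigenspace of $\gamma$ in a $k^{\mathrm{sep}}$-vector space on which it acts diagonalisably is the sum of eigenspaces with eigenvalues in $\lambda\mathcal L$; $C^{(\mathcal L)}_{\mathbf W}(\gamma)$ is the $\mathcal L$-close $1$-eigenspace. $C^{(\mathcal L)}_{\mathrm{GL}(\mathbf V)}(\gamma)$ is the subgroup of $\mathrm{GL}(\mathbf V_{k^{\mathrm{sep}}})$ stabilising every $\mathcal L$-close eigenspace of $\gamma$. For Galois-stable $\mathcal L$, $C^{(\mathcal L)}_{\mathbf V}(\gamma)$ and $C^{(\mathcal L)}_{\mathbf G}(\gamma)$ are the $k$-descents of $C^{(\mathcal L)}_{\mathbf V_{k^{\mathrm{sep}}}}(\gamma)$ and of $\mathbf G_{k^{\mathrm{sep}}}\cap C^{(\mathcal L)}_{\mathrm{GL}(\mathbf V_{k^{\mathrm{sep}}})}(\gamma)$; $C^{(\mathcal L)}_{\mathbf G}(\gamma)$ depends only on $\mathbf G$, $\mathcal L$ and the automorphism of $\mathbf G$ induced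 by $\gamma$. $\mathrm{Cent}_{\mathbf G}(\gamma^n)$ is the scheme-theoretic centraliser. *)

From HB Require Import structures.
From mathcomp Require Import all_boot all_order all_algebra all_field.
From mathcomp Require Import mpoly.
Set Implicit Arguments. Unset Strict Implicit. Unset Printing Implicit Defensive.
Import Order.TTheory GRing.Theory Num.Theory.
Local Open Scope ring_scope.

Definition mxpow (R : comUnitRingType) d (A : 'M[R]_d) (m : nat) : 'M[R]_d :=
  iter m (mulmx A) 1%:M.

Definition mxpowz (R : comUnitRingType) d (A : 'M[R]_d) (n : int) : 'M[R]_d :=
  match n with
  | Posz m => mxpow A m
  | Negz m => mxpow (invmx A) m.+1
  end.

(* ---------- the affine group G inside GL_d, by its equations ----------
   G is a closed subgroup scheme of GL_d over k, cut out by the finite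
   family of polynomial equations [eqs] in the d*d matrix coefficients. *)
Definition Gpts (k : fieldType) d (eqs : seq {mpoly k[d * d]})
    (R : comUnitRingType) (f : k -> R) (A : 'M[R]_d) : Prop :=
  A \in unitmx /\ forall p, p \in eqs -> mmap f (fun i => mxvec A 0 i) p = 0.

Definition is_subgroup_scheme (k : fieldType) d (eqs : seq {mpoly k[d * d]}) :=
  forall (R : comUnitRingType) (f : {rmorphism k -> R}),
    [/\ Gpts eqs f 1%:M,
        forall A B, Gpts eqs f A -> Gpts eqs f B -> Gpts eqs f (A *m B)
      & forall A, Gpts eqs f A -> Gpts eqs f (invmx A)].

Definition normalises (k : fieldType) d (eqs : seq {mpoly k[d * d]})
    (gamma : 'M[k]_d) :=
  forall (R : comUnitRingType) (f : {rmorphism k -> R}) (A : 'M[R]_d),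
    Gpts eqs f A ->
    Gpts eqs f (map_mx f gamma *m A *m invmx (map_mx f gamma)).

Definition conj_trivial (k : fieldType) d (eqs : seq {mpoly k[d * d]})
    (gamma : 'M[k]_d) (m : nat) :=
  forall (R : comUnitRingType) (f : {rmorphism k -> R}) (A : 'M[R]_d),
    Gpts eqs f A ->
    mxpow (map_mx f gamma) m *m A *m invmx (mxpow (map_mx f gamma) m) = A.

Definition conj_order (k : fieldType) d (eqs : seq {mpoly k[d * d]})
    (gamma : 'M[k]_d) (N : nat) :=
  [/\ (0 < N)%N, conj_trivial eqs gamma N
    & forall m, (0 < m < N)%N -> ~ conj_trivial eqs gamma m].

Definition is_sep_closure (k K : fieldType) (iota : {rmorphism k -> K}) :=
  (forall p : {poly K}, (1 < size p)%N -> separable_poly p -> exists x, root p x)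
  /\ (forall x : K, exists p : {poly k},
        [/\ p != 0, separable_poly p & root (map_poly iota p) x]).

Definition is_mult_subgroup (K : fieldType) (L : K -> Prop) :=
  [/\ forall x, L x -> x != 0, L 1,
      forall x y, L x -> L y -> L (x * y)
    & forall x, L x -> L x^-1].

Definition gal_stable (k K : fieldType) (iota : {rmorphism k -> K})
    (L : K -> Prop) :=
  forall sigma : {rmorphism K -> K},
    (forall c, sigma (iota c) = iota c) -> bijective sigma ->
    forall x, L x -> L (sigma x).

Definition powgrp (K : fieldType) (L : K -> Prop) (n : int) : K -> Prop :=
  fun x => exists y, L y /\ x = y ^ n.

Definition mu (K : fieldType) (n : int) : K -> Prop :=
  fun x => x != 0 /\ x ^ n = 1.

Definition close_eigsp (K : fieldType) d (A : 'M[K]_d) (L : K -> Prop)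
    (lambda : K) (v : 'cV[K]_d) : Prop :=
  exists s : seq (K * 'cV[K]_d),
    (forall p, p \in s ->
       (exists l, L l /\ p.1 = lambda * l) /\ A *m p.2 = p.1 *: p.2)
    /\ v = \sum_(p <- s) p.2.

Definition CV (K : fieldType) d (A : 'M[K]_d) (L : K -> Prop) : 'cV[K]_d -> Prop :=
  close_eigsp A L 1.

(* R-points (R a commutative K-algebra via h) of C^(L)_{GL(V_K)}(A):
   invertible g stabilising R (x) W for every L-close eigenspace W of A. *)
Definition stab_close (K : fieldType) d (A : 'M[K]_d) (L : K -> Prop)
    (R : comUnitRingType) (h : K -> R) (g : 'M[R]_d) : Prop :=
  g \in unitmx /\
  forall lambda : K, lambda != 0 ->
    forall w, close_eigsp A L lambda w ->
      exists s : seq (R * 'cV[K]_d),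
        (forall p, p \in s -> close_eigsp A L lambda p.2) /\
        g *m map_mx h w = \sum_(p <- s) p.1 *: map_mx h p.2.

Definition CG (k K : fieldType) (iota : {rmorphism k -> K}) d
    (eqs : seq {mpoly k[d * d]}) (gamma : 'M[k]_d) (L : K -> Prop)
    (R : comUnitRingType) (h : {rmorphism K -> R}) (g : 'M[R]_d) : Prop :=
  Gpts eqs (h \o iota) g /\ stab_close (map_mx iota gamma) L h g.

Definition CentG (k K : fieldType) (iota : {rmorphism k -> K}) d
    (eqs : seq {mpoly k[d * d]}) (gamma : 'M[k]_d) (n : int)
    (R : comUnitRingType) (h : {rmorphism K -> R}) (g : 'M[R]_d) : Prop :=
  Gpts eqs (h \o iota) g /\
  g *m mxpowz (map_mx (h \o iota) gamma) n = mxpowz (map_mx (h \o iota) gamma) n *m g.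

From HB Require Import structures.
From mathcomp Require Import all_boot all_order all_algebra all_field.
From mathcomp Require Import mpoly.
From mathcomp Require Import ring.
Import Order.TTheory GRing.Theory Num.Theory.
Local Open Scope ring_scope.
Set Implicit Arguments. Unset Strict Implicit.

(* Over K the matrix A of gamma is diagonalisable, A = P diag(e) P^-1 with
   nonzero eigenvalues e_i, and every notion is read in the eigenbasis P:
   - v is in the L-close lam-eigenspace iff its nonzero coordinates sit at
     eigenvalues e_i in the coset lam*L (close_eigspE);
   - g stabilises all L-close eigenspaces iff its matrix X = P^-1 g P has
     X_ij = 0 unless e_i lies in e_j*L (stab_closeE);
   - g commutes with A^n iff X_ij = 0 unless e_i^n = e_j^n (comm_conj_diagE).
   Both parts then reduce to arithmetic of cosets of L in K^x: x |-> x^n maps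
   a*L into a^n*L^n, and back when mu_n <= L (part 1); if a^N = b^N and
   mu_N cap L <= mu_n <= L, then b is in a*L iff a^n = b^n (part 2). For a
   point g of G, triviality of the action of gamma^N makes X_ij vanish unless
   e_i^N = e_j^N, which is how N enters. *)

Definition in_coset (K : fieldType) (L : K -> Prop) (a b : K) : Prop :=
  exists l, L l /\ b = a * l.

Lemma in_cosetE (K : fieldType) (L : K -> Prop) (a b : K) :
  a != 0 -> in_coset L a b <-> L (b / a).
Proof.
move=> a0; split=> [[l [Ll ->]] | Lba]; first by rewrite mulrC mulKf.
by exists (b / a); split; rewrite // mulrC divfK.
Qed.
Arguments in_cosetE {K} L {a b}.

Section Cosets.
Variables (K : fieldType) (L : K -> Prop).
Hypothesis HL : is_mult_subgroup L.

Lemma in_coset_refl a : in_coset L a a.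
Proof. by case: HL => _ L1 _ _; exists 1; rewrite mulr1. Qed.

Lemma in_coset_trans a b c : in_coset L a b -> in_coset L b c -> in_coset L a c.
Proof.
case: HL => _ _ LM _ [l1 [Ll1 ->]] [l2 [Ll2 ->]].
by exists (l1 * l2); split; [exact: LM | rewrite mulrA].
Qed.

End Cosets.

Lemma powgrp_subgroup (K : fieldType) (L : K -> Prop) (n : int) :
  is_mult_subgroup L -> is_mult_subgroup (powgrp L n).
Proof.
case=> L0 L1 LM LV; split.
- by move=> _ [y [Ly ->]]; exact/expfz_neq0/L0.
- by exists 1; rewrite exp1rz.
- move=> _ _ [y [Ly ->]] [z [Lz ->]].
  by exists (y * z); rewrite expfzMl; split=> //; exact: LM.
- move=> _ [y [Ly ->]].
  by exists y^-1; rewrite exprz_inv invr_expz; split=> //; exact: LV.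
Qed.

Lemma in_coset_powz (K : fieldType) (L : K -> Prop) (n : int) a b :
  in_coset L a b -> in_coset (powgrp L n) (a ^ n) (b ^ n).
Proof.
by case=> l [Ll ->]; exists (l ^ n); rewrite expfzMl; split=> //; exists l.
Qed.

Lemma powz_eq_mu (K : fieldType) (n : int) (a b : K) :
  a != 0 -> b != 0 -> a ^ n = b ^ n <-> mu n (b / a).
Proof.
move=> a0 b0; rewrite /mu mulf_eq0 invr_eq0 negb_or a0 b0 /=.
rewrite expfzMl exprz_inv -invr_expz.
split=> [-> | [_ /divr1_eq //]]; split=> //; exact/divff/expfz_neq0.
Qed.

(* If mu_n is contained in L, the coset condition can be recovered from the
   n-th powers: this is where equality in part (1) comes from. *)
Lemma in_coset_powzV (K : fieldType) (L : K -> Prop) (n : int) (a b : K) :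
  is_mult_subgroup L -> (forall x, mu n x -> L x) -> a != 0 -> b != 0 ->
  in_coset (powgrp L n) (a ^ n) (b ^ n) -> in_coset L a b.
Proof.
move=> HL Hmu a0 b0 [_ [[y [Ly ->]] Eb]].
have [y0 _ LM _] := HL; have ay0 : a * y != 0 by rewrite mulf_neq0 // y0.
have /Hmu Lr : mu n (b / (a * y)).
  by apply/(powz_eq_mu n ay0 b0); rewrite expfzMl Eb.
apply/(in_cosetE L a0).2; have -> : b / a = y * (b / (a * y)).
  by field; rewrite y0.
exact: LM Ly Lr.
Qed.

(* Arithmetic core of part (2): for eigenvalues a, b with a^N = b^N, under
   mu_N cap L <= mu_n <= L, being in the same L-coset means a^n = b^n. *)
Lemma in_coset_powz_eq (K : fieldType) (L : K -> Prop) (N : nat) (n : int)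
    (a b : K) :
  is_mult_subgroup L ->
  (forall x, mu N%:Z x -> L x -> mu n x) -> (forall x, mu n x -> L x) ->
  a != 0 -> b != 0 -> a ^ N%:Z = b ^ N%:Z ->
  in_coset L a b <-> a ^ n = b ^ n.
Proof.
move=> HL HmuN Hmun a0 b0 abN; rewrite (in_cosetE L a0) powz_eq_mu //.
by split=> [Lba | /Hmun //]; apply: HmuN => //; apply/powz_eq_mu.
Qed.

Lemma mulmx_sum_col (R : comPzRingType) m n (A : 'M[R]_(m, n)) (y : 'cV[R]_n) :
  A *m y = \sum_(i < n) y i 0 *: col i A.
Proof.
rewrite {1}[y]matrix_sum_delta mulmx_sumr; apply: eq_bigr => i _.
by rewrite big_ord1 -scalemxAr colE.
Qed.

Lemma invmx_right (R : comUnitRingType) d (A B : 'M[R]_d) :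
  A *m B = 1%:M -> invmx A = B.
Proof.
move=> AB; have [uA _] := mulmx1_unit AB.
by rewrite -[invmx A]mulmx1 -AB mulmxA mulVmx // mul1mx.
Qed.

Lemma mxpow_unit (R : comUnitRingType) d (A : 'M[R]_d) m :
  A \in unitmx -> mxpow A m \in unitmx.
Proof. by move=> Au; elim: m => [|m IH]; rewrite /= ?unitmx1 // unitmx_mul Au. Qed.

Lemma map_mxpow (F : fieldType) (R : comUnitRingType) (f : {rmorphism F -> R}) d
    (A : 'M[F]_d) m :
  map_mx f (mxpow A m) = mxpow (map_mx f A) m.
Proof. by elim: m => [|m IH]; rewrite /= ?map_mx1 // map_mxM IH. Qed.

Lemma map_mxpowz (F : fieldType) (R : comUnitRingType) (f : {rmorphism F -> R}) d
    (A : 'M[F]_d) n :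
  map_mx f (mxpowz A n) = mxpowz (map_mx f A) n.
Proof. by case: n => m; rewrite /mxpowz map_mxpow ?map_invmx. Qed.

Lemma sum_neq0 (V : zmodType) (I : eqType) (r : seq I) (F : I -> V) :
  \sum_(i <- r) F i != 0 -> exists2 i, i \in r & F i != 0.
Proof.
move=> nz; apply/hasP; apply: contraNT nz => /hasPn Z.
by rewrite big1_seq // => i /andP[_ /Z/negPn/eqP].
Qed.

Section Conjugation.
Variables (R : comUnitRingType) (d : nat) (P Q : 'M[R]_d).
Hypotheses (PQ : P *m Q = 1%:M) (QP : Q *m P = 1%:M).

Lemma comm_conjE (D g : 'M[R]_d) :
  g *m (P *m D *m Q) = (P *m D *m Q) *m g <->
  (Q *m g *m P) *m D = D *m (Q *m g *m P).
Proof.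
split=> [/(congr1 (fun X => Q *m X *m P)) | /(congr1 (fun X => P *m X *m Q))] /=.
  by rewrite !mulmxA -!(mulmxA _ Q P) QP !mulmx1 mul1mx.
by rewrite !mulmxA PQ mul1mx -!(mulmxA _ P Q) PQ mulmx1.
Qed.

End Conjugation.

Section DiagonalCoordinates.
Variables (K : fieldType) (d : nat) (P Q : 'M[K]_d).
Hypotheses (PQ : P *m Q = 1%:M) (QP : Q *m P = 1%:M).

Lemma mxpow_conj_diag (e : 'rV[K]_d) m :
  mxpow (P *m diag_mx e *m Q) m = P *m diag_mx (\row_i e 0 i ^+ m) *m Q.
Proof.
elim: m => [|m IH].
  have -> : \row_i e 0 i ^+ 0 = const_mx 1 by apply/rowP=> i; rewrite !mxE.
  by rewrite diag_const_mx mulmx1 PQ.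
rewrite /= IH !mulmxA -[P *m diag_mx e *m Q *m P]mulmxA QP mulmx1.
rewrite -[P *m diag_mx e *m _]mulmxA mulmx_diag.
by congr (_ *m diag_mx _ *m _); apply/rowP=> i; rewrite !mxE exprS.
Qed.

Lemma mxpowz_conj_diag (e : 'rV[K]_d) n : (forall i, e 0 i != 0) ->
  mxpowz (P *m diag_mx e *m Q) n = P *m diag_mx (\row_i e 0 i ^ n) *m Q.
Proof.
move=> e0; case: n => m; rewrite /mxpowz; first by rewrite mxpow_conj_diag.
have -> : invmx (P *m diag_mx e *m Q) = P *m diag_mx (\row_i (e 0 i)^-1) *m Q.
  apply: invmx_right; rewrite !mulmxA -[_ *m Q *m P]mulmxA QP mulmx1.
  rewrite -[P *m diag_mx e *m _]mulmxA mulmx_diag.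
  have -> : \row_i (e 0 i * (\row_i (e 0 i)^-1) 0 i) = const_mx 1.
    by apply/rowP=> i; rewrite !mxE mulfV.
  by rewrite diag_const_mx mulmx1 PQ.
rewrite mxpow_conj_diag; congr (_ *m diag_mx _ *m _).
by apply/rowP=> i; rewrite !mxE exprVn.
Qed.

Lemma Q_col i : Q *m col i P = delta_mx i 0.
Proof. by rewrite colE mulmxA QP mul1mx. Qed.

Lemma conj_diag_col (e : 'rV[K]_d) i :
  (P *m diag_mx e *m Q) *m col i P = e 0 i *: col i P.
Proof.
rewrite -!mulmxA Q_col colE scalemxAr; congr (P *m _).
apply/matrixP=> a b; rewrite mul_diag_mx !mxE.
by case: (eqVneq a i) => [->|]; rewrite ?mulr0 ?mulr1.
Qed.

Lemma conj_diag_eig_coord (e : 'rV[K]_d) c (x : 'cV[K]_d) :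
  (P *m diag_mx e *m Q) *m x = c *: x ->
  forall i, e 0 i * (Q *m x) i 0 = c * (Q *m x) i 0.
Proof.
move=> /(congr1 (mulmx Q)); rewrite -scalemxAr !mulmxA QP mul1mx -mulmxA.
by rewrite mul_diag_mx => /matrixP E i; have := E i 0; rewrite !mxE.
Qed.

Lemma close_eigspE (Lp : K -> Prop) (e : 'rV[K]_d) lam w : Lp 1 ->
  close_eigsp (P *m diag_mx e *m Q) Lp lam w <->
  forall i, (Q *m w) i 0 != 0 -> in_coset Lp lam (e 0 i).
Proof.
move=> L1; split=> [[s [Hs ->]] i | Hw].
  rewrite mulmx_sumr summxE => nz.
  have [p ps nzp] := sum_neq0 nz.
  have [[l [Ll El]] Ep] := Hs p ps.
  by exists l; split=> //; rewrite -El; apply: (mulIf nzp); exact: conj_diag_eig_coord.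
exists [seq (if (Q *m w) i 0 == 0 then lam else e 0 i, (Q *m w) i 0 *: col i P)
       | i <- index_enum 'I_d]; split.
  move=> _ /mapP[i _ ->] /=; case: eqP => [-> | /eqP nz].
    by split; [exists 1; rewrite mulr1 | rewrite scale0r mulmx0 scaler0].
  by split; [exact: Hw | rewrite -scalemxAr conj_diag_col !scalerA mulrC].
by rewrite big_map -[LHS]mul1mx -PQ -mulmxA mulmx_sum_col.
Qed.

Lemma col_close_eigsp (Lp : K -> Prop) (e : 'rV[K]_d) lam i :
  Lp 1 -> in_coset Lp lam (e 0 i) ->
  close_eigsp (P *m diag_mx e *m Q) Lp lam (col i P).
Proof.
move=> L1 Hi; apply/close_eigspE => // i'; rewrite Q_col mxE.
by case: (i' =P i) => [-> // | _ /=]; rewrite eqxx.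
Qed.

Lemma stab_close_coords (Lp : K -> Prop) (e : 'rV[K]_d) (R : comUnitRingType)
    (h : {rmorphism K -> R}) (g : 'M[R]_d) :
  is_mult_subgroup Lp -> (forall i, e 0 i != 0) ->
  stab_close (P *m diag_mx e *m Q) Lp h g -> forall i j,
    (map_mx h Q *m g *m map_mx h P) i j != 0 -> in_coset Lp (e 0 j) (e 0 i).
Proof.
move=> HLp e0 [_ Hst] i j; have [_ L1 _ _] := HLp.
have [s [Hs Eg]] := Hst _ (e0 j) _ (col_close_eigsp L1 (in_coset_refl HLp _)).
have -> : (map_mx h Q *m g *m map_mx h P) i j =
          (map_mx h Q *m (g *m map_mx h (col j P))) i 0.
  by rewrite map_col colE !mulmxA -colE !mxE.
rewrite Eg mulmx_sumr summxE => /sum_neq0[p ps].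
rewrite -scalemxAr -map_mxM 2!mxE.
have [-> | nzp] := eqVneq ((Q *m p.2) i 0) 0; first by rewrite rmorph0 mulr0 eqxx.
by move=> _; exact: (close_eigspE _ _ _ L1).1 (Hs p ps) i nzp.
Qed.

(* Conversely, such a g stabilises every L-close eigenspace: the coordinates
   c = X (Q w) of g w only involve eigenvalues in the coset of w. *)
Lemma stab_close_of_coords (Lp : K -> Prop) (e : 'rV[K]_d) (R : comUnitRingType)
    (h : {rmorphism K -> R}) (g : 'M[R]_d) :
  is_mult_subgroup Lp -> g \in unitmx -> (forall i j,
    (map_mx h Q *m g *m map_mx h P) i j != 0 -> in_coset Lp (e 0 j) (e 0 i)) ->
  stab_close (P *m diag_mx e *m Q) Lp h g.
Proof.
move=> HLp gu HX; have [_ L1 _ _] := HLp; split=> // lam _ w Hw.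
pose c := (map_mx h Q *m g *m map_mx h P) *m map_mx h (Q *m w).
have Egw : g *m map_mx h w = map_mx h P *m c.
  rewrite /c !mulmxA -map_mxM PQ map_mx1 mul1mx.
  by rewrite -!mulmxA -map_mxM mulmxA PQ mul1mx.
exists [seq (c i 0, if c i 0 == 0 then 0 else col i P) | i <- index_enum 'I_d].
split; last first.
  rewrite big_map Egw mulmx_sum_col; apply: eq_bigr => i _ /=.
  by case: eqP => [-> | _]; rewrite ?scale0r // map_col.
move=> _ /mapP[i _ ->] /=; case: eqP => [_ | /eqP].
  by apply/close_eigspE => // i'; rewrite mulmx0 mxE eqxx.
rewrite /c mxE => /sum_neq0[j _]; rewrite [map_mx h _ j 0]mxE.
have [-> | nzw] := eqVneq ((Q *m w) j 0) 0; first by rewrite rmorph0 mulr0 eqxx.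
have [-> | nzX] := eqVneq ((map_mx h Q *m g *m map_mx h P) i j) 0.
  by rewrite mul0r eqxx.
move=> _; apply: (col_close_eigsp L1 (in_coset_trans HLp _ (HX i j nzX))).
exact: (close_eigspE _ _ _ L1).1 Hw j nzw.
Qed.

Lemma stab_closeE (Lp : K -> Prop) (e : 'rV[K]_d) (R : comUnitRingType)
    (h : {rmorphism K -> R}) (g : 'M[R]_d) :
  is_mult_subgroup Lp -> (forall i, e 0 i != 0) ->
  stab_close (P *m diag_mx e *m Q) Lp h g <->
  g \in unitmx /\ forall i j,
    (map_mx h Q *m g *m map_mx h P) i j != 0 -> in_coset Lp (e 0 j) (e 0 i).
Proof.
move=> HLp e0; split=> [Hg | [gu HX]]; last exact: stab_close_of_coords.
by split; [exact: Hg.1 | exact: stab_close_coords].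
Qed.

Lemma comm_conj_diagE (e : 'rV[K]_d) (R : comUnitRingType)
    (h : {rmorphism K -> R}) (g : 'M[R]_d) :
  g *m map_mx h (P *m diag_mx e *m Q) = map_mx h (P *m diag_mx e *m Q) *m g <->
  forall i j, (map_mx h Q *m g *m map_mx h P) i j != 0 -> e 0 i = e 0 j.
Proof.
have PQh : map_mx h P *m map_mx h Q = 1%:M by rewrite -map_mxM PQ map_mx1.
have QPh : map_mx h Q *m map_mx h P = 1%:M by rewrite -map_mxM QP map_mx1.
rewrite !map_mxM map_diag_mx (comm_conjE PQh QPh).
set X := map_mx h Q *m g *m map_mx h P.
have entries i j : (X *m diag_mx (map_mx h e)) i j = X i j * h (e 0 j) /\
                   (diag_mx (map_mx h e) *m X) i j = h (e 0 i) * X i j.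
  by rewrite mul_mx_diag mul_diag_mx !mxE.
split=> [/matrixP E i j nzX | E]; last first.
  apply/matrixP=> i j; have [-> ->] := entries i j.
  have [-> | /E ->] := eqVneq (X i j) 0; by rewrite ?mul0r ?mulr0 // mulrC.
apply/eqP; apply: contraNT nzX => ne.
have Eij : X i j * h (e 0 j - e 0 i) = 0.
  by have [El Er] := entries i j; rewrite rmorphB mulrBr -El E Er mulrC subrr.
have hu : h (e 0 j - e 0 i) \is a GRing.unit by rewrite fmorph_unit subr_eq0 eq_sym.
by rewrite -(mulrK hu (X i j)) Eij mul0r.
Qed.

Lemma close_eigsp_powz (L : K -> Prop) (n : int) (e : 'rV[K]_d) lam w :
  is_mult_subgroup L ->
  close_eigsp (P *m diag_mx e *m Q) L lam w ->
  close_eigsp (P *m diag_mx (\row_i e 0 i ^ n) *m Q) (powgrp L n) (lam ^ n) w.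
Proof.
move=> HL; have [_ L1 _ _] := HL; have [_ Ln1 _ _] := powgrp_subgroup n HL.
rewrite (close_eigspE _ _ _ L1) (close_eigspE _ _ _ Ln1) => Hw i /Hw.
by rewrite mxE; exact: in_coset_powz.
Qed.

Lemma stab_close_powz (L : K -> Prop) (n : int) (e : 'rV[K]_d)
    (R : comUnitRingType) (h : {rmorphism K -> R}) (g : 'M[R]_d) :
  is_mult_subgroup L -> (forall i, e 0 i != 0) ->
  stab_close (P *m diag_mx e *m Q) L h g ->
  stab_close (P *m diag_mx (\row_i e 0 i ^ n) *m Q) (powgrp L n) h g.
Proof.
move=> HL e0; have en0 i : (\row_i e 0 i ^ n) 0 i != 0.
  by rewrite mxE expfz_neq0.
rewrite (stab_closeE h g HL e0) (stab_closeE h g (powgrp_subgroup n HL) en0).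
by case=> gu Hg; split=> // i j /Hg; rewrite !mxE; exact: in_coset_powz.
Qed.

Lemma close_eigsp_powzV (L : K -> Prop) (n : int) (e : 'rV[K]_d) lam w :
  is_mult_subgroup L -> (forall x, mu n x -> L x) ->
  lam != 0 -> (forall i, e 0 i != 0) ->
  close_eigsp (P *m diag_mx (\row_i e 0 i ^ n) *m Q) (powgrp L n) (lam ^ n) w ->
  close_eigsp (P *m diag_mx e *m Q) L lam w.
Proof.
move=> HL Hmu lam0 e0; have [_ L1 _ _] := HL.
have [_ Ln1 _ _] := powgrp_subgroup n HL.
rewrite (close_eigspE _ _ _ L1) (close_eigspE _ _ _ Ln1) => Hw i /Hw.
by rewrite mxE; exact: in_coset_powzV.
Qed.

Lemma stab_close_powzV (L : K -> Prop) (n : int) (e : 'rV[K]_d)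
    (R : comUnitRingType) (h : {rmorphism K -> R}) (g : 'M[R]_d) :
  is_mult_subgroup L -> (forall x, mu n x -> L x) -> (forall i, e 0 i != 0) ->
  stab_close (P *m diag_mx (\row_i e 0 i ^ n) *m Q) (powgrp L n) h g ->
  stab_close (P *m diag_mx e *m Q) L h g.
Proof.
move=> HL Hmu e0; have en0 i : (\row_i e 0 i ^ n) 0 i != 0.
  by rewrite mxE expfz_neq0.
rewrite (stab_closeE h g HL e0) (stab_closeE h g (powgrp_subgroup n HL) en0).
by case=> gu Hg; split=> // i j /Hg; rewrite !mxE; exact: in_coset_powzV.
Qed.

Lemma comm_powz_stab_close (L : K -> Prop) (N : nat) (n : int) (e : 'rV[K]_d)
    (R : comUnitRingType) (h : {rmorphism K -> R}) (g : 'M[R]_d) :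
  is_mult_subgroup L ->
  (forall x, mu N%:Z x -> L x -> mu n x) -> (forall x, mu n x -> L x) ->
  (forall i, e 0 i != 0) -> g \in unitmx ->
  (forall i j, (map_mx h Q *m g *m map_mx h P) i j != 0 ->
     e 0 i ^ N%:Z = e 0 j ^ N%:Z) ->
  g *m map_mx h (P *m diag_mx (\row_i e 0 i ^ n) *m Q) =
    map_mx h (P *m diag_mx (\row_i e 0 i ^ n) *m Q) *m g <->
  stab_close (P *m diag_mx e *m Q) L h g.
Proof.
move=> HL HmuN Hmun e0 gu HgN; rewrite comm_conj_diagE (stab_closeE h g HL e0).
have coset_pow i j : (map_mx h Q *m g *m map_mx h P) i j != 0 ->
    in_coset L (e 0 j) (e 0 i) <-> e 0 j ^ n = e 0 i ^ n.
  by move=> nz; exact: in_coset_powz_eq (esym (HgN i j nz)).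
split=> [Hc | [_ Hs] i j nz].
  by split=> // i j nz; apply/(coset_pow i j nz); have := Hc i j nz; rewrite !mxE.
by rewrite !mxE; apply/esym/(coset_pow i j nz)/Hs.
Qed.

End DiagonalCoordinates.

Lemma diag_unit_neq0 (F : fieldType) d (e : 'rV[F]_d) :
  diag_mx e \in unitmx -> forall i, e 0 i != 0.
Proof.
rewrite unitmxE det_diag unitfE => H i; apply: contraNneq H => ei0.
by apply/eqP; rewrite (bigD1 i) //= ei0 mul0r.
Qed.

Lemma conj_trivial_comm (k : fieldType) d (eqs : seq {mpoly k[d * d]})
    (gamma : 'M[k]_d) N (R : comUnitRingType) (f : {rmorphism k -> R})
    (g : 'M[R]_d) :
  gamma \in unitmx -> conj_trivial eqs gamma N -> Gpts eqs f g ->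
  g *m mxpowz (map_mx f gamma) N%:Z = mxpowz (map_mx f gamma) N%:Z *m g.
Proof.
move=> gu HN /(HN R f) E.
have Mu : mxpow (map_mx f gamma) N \in unitmx by rewrite mxpow_unit ?map_unitmx.
by rewrite -{1}E -mulmxA mulVmx // mulmx1.
Qed.

Unset Implicit Arguments. Set Strict Implicit.
Theorem lemma4p11
  (k K : fieldType) (iota : {rmorphism k -> K}) (d : nat)
  (eqs : seq {mpoly k[d * d]}) (gamma : 'M[k]_d) (L : K -> Prop)
  (HK : is_sep_closure iota)
  (HG : is_subgroup_scheme eqs)
  (Hgu : gamma \in unitmx)
  (HN : normalises eqs gamma)
  (Hdiag : exists P : 'M[K]_d,
      P \in unitmx /\ is_diag_mx (invmx P *m map_mx iota gamma *m P))
  (HL : is_mult_subgroup L)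
  (HLgal : gal_stable iota L) :
  (forall n : int,
     [/\ (forall v, CV (map_mx iota gamma) L v ->
                    CV (mxpowz (map_mx iota gamma) n) (powgrp L n) v),
         (forall (R : comUnitRingType) (h : {rmorphism K -> R}) (g : 'M[R]_d),
            CG iota eqs gamma L h g ->
            CG iota eqs (mxpowz gamma n) (powgrp L n) h g)
       & (forall x, mu n x -> L x) ->
         (forall v, CV (map_mx iota gamma) L v <->
                    CV (mxpowz (map_mx iota gamma) n) (powgrp L n) v) /\
         (forall (R : comUnitRingType) (h : {rmorphism K -> R}) (g : 'M[R]_d),
            CG iota eqs gamma L h g <->
            CG iota eqs (mxpowz gamma n) (powgrp L n) h g)])
  /\
  (forall (N : nat) (n : int),
     conj_order eqs gamma N ->
     (forall x, mu (N%:Z) x -> L x -> mu n x) ->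
     (forall x, mu n x -> L x) ->
     forall (R : comUnitRingType) (h : {rmorphism K -> R}) (g : 'M[R]_d),
       CentG iota eqs gamma n h g <-> CG iota eqs gamma L h g).
Proof.
have [P [Pu /diag_mxP[e De]]] := Hdiag.
set Q := invmx P in De.
have PQ : P *m Q = 1%:M by rewrite mulmxV.
have QP : Q *m P = 1%:M by rewrite mulVmx.
have EA : map_mx iota gamma = P *m diag_mx e *m Q.
  by rewrite -De !mulmxA PQ mul1mx -mulmxA PQ mulmx1.
have e0 : forall i, e 0 i != 0.
  by apply: diag_unit_neq0; rewrite -De !unitmx_mul unitmx_inv Pu map_unitmx Hgu.
have EAn n : mxpowz (map_mx iota gamma) n = P *m diag_mx (\row_i e 0 i ^ n) *m Q.
  by rewrite EA (mxpowz_conj_diag PQ QP n e0).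
have EGn (R : comUnitRingType) (h : {rmorphism K -> R}) n :
    mxpowz (map_mx (h \o iota) gamma) n =
    map_mx h (P *m diag_mx (\row_i e 0 i ^ n) *m Q).
  by rewrite map_mx_comp -map_mxpowz EAn.
split=> [n | N n [_ Ntriv _] HmuN Hmun R h g].
  rewrite /CV /CG map_mxpowz EAn EA; split.
  - by move=> v /(close_eigsp_powz PQ QP n HL); rewrite exp1rz.
  - by move=> R h g [Gg Hs]; split=> //; exact: stab_close_powz.
  - move=> Hmu; split=> [v | R h g]; split.
    + by move=> /(close_eigsp_powz PQ QP n HL); rewrite exp1rz.
    + move=> Hv; apply: (close_eigsp_powzV PQ QP HL Hmu (oner_neq0 K) e0).
      by rewrite exp1rz.
    + by case=> Gg Hs; split=> //; exact: stab_close_powz.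
    + by case=> Gg Hs; split=> //; exact: stab_close_powzV Hs.
have HgN (g' : 'M[R]_d) : Gpts eqs (h \o iota) g' -> forall i j,
    (map_mx h Q *m g' *m map_mx h P) i j != 0 -> e 0 i ^ N%:Z = e 0 j ^ N%:Z.
  move=> /(conj_trivial_comm Hgu Ntriv); rewrite EGn (comm_conj_diagE PQ QP).
  by move=> Hc i j /Hc; rewrite !mxE.
rewrite /CentG /CG EGn EA.
split=> -[Gg Hg]; split=> //.
  exact: (comm_powz_stab_close PQ QP HL HmuN Hmun e0 Gg.1 (HgN g Gg)).1.
exact: (comm_powz_stab_close PQ QP HL HmuN Hmun e0 Gg.1 (HgN g Gg)).2.
Qed.
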